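(* Let $S$ be a finite collection of squares of sizes $d_i\times d_i$, where each $d_i$ is a power of two. Then the squares of $S$ can be placed axis-parallel in the plane without overlapping so that they fully cover an axis-parallel square of side length at least $\frac12\sqrt{\sum_i d_i^2}$. *)

From Stdlib Require Import Reals Lra ZArith.
Open Scope R_scope.

Definition side (k : Z) : R := powerRZ 2 k.

Definition closed_sq (x y d : R) (p : R * R) : Prop :=
  x <= fst p <= x + d /\ y <= snd p <= y + d.

Definition open_sq (x y d : R) (p : R * R) : Prop :=
  x < fst p < x + d /\ y < snd p < y + d.

Fixpoint sum_lt (n : nat) (f : nat -> R) : R :=
  match n with
  | O => 0
  | S m => sum_lt m f + f m
  end.

From Stdlib Require Import Reals ZArith List Permutation Lia Lra.
Open Scope R_scope.

(* Induction on the number of squares, carrying upward from the smallest side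
   [s] as in binary addition.  If at least four squares have side [s], four of
   them are merged into one square of side [2s]; the smaller family is packed
   and that square is cut back into its quadrants.  Otherwise the at most three
   squares of side [s] are laid beside a packing of the others, which all have
   side at least [2s].  The invariant is that the covered square, of side [S],
   satisfies [sum_i d_i^2 + d_j^2 <= 4 S^2] for some square [j] of the family:
   the slack [d_j^2 >= 4 s^2] absorbs the area [<= 3 s^2] of the squares laid
   aside. *)

Lemma side_pos k : 0 < side k.
Proof. apply powerRZ_lt; lra. Qed.

Lemma side_succ k : side (k + 1) = 2 * side k.
Proof. unfold side; rewrite powerRZ_add by lra; simpl; lra. Qed.

Lemma side_sq_le k k' : (k <= k')%Z -> side k ^ 2 <= side k' ^ 2.
Proof.
  intros Hk; apply pow_incr; split; [apply Rlt_le, side_pos |].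
  unfold side; rewrite !powerRZ_Rpower by lra.
  apply Rle_Rpower; [lra | apply IZR_le; exact Hk].
Qed.

Fixpoint lsum (f : nat -> R) (l : list nat) : R :=
  match l with nil => 0 | i :: t => f i + lsum f t end.

Lemma lsum_app f l1 l2 : lsum f (l1 ++ l2) = lsum f l1 + lsum f l2.
Proof. induction l1 as [|i l1 IH]; simpl; [| rewrite IH]; lra. Qed.

Lemma lsum_perm f l l' : Permutation l l' -> lsum f l = lsum f l'.
Proof. induction 1; simpl; lra. Qed.

Lemma lsum_ext_in f g l : (forall i, In i l -> f i = g i) -> lsum f l = lsum g l.
Proof.
  induction l as [|i l IH]; simpl; intros Hfg; [reflexivity |].
  rewrite Hfg, IH by auto; reflexivity.
Qed.

Lemma lsum_const_in f c l : (forall i, In i l -> f i = c) -> lsum f l = INR (length l) * c.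
Proof.
  intros Hc; rewrite (lsum_ext_in f (fun _ => c)) by exact Hc; clear Hc.
  induction l as [|i l IH]; [simpl; lra |].
  cbn [lsum length]; rewrite S_INR, IH; lra.
Qed.

Lemma lsum_seq f n : sum_lt n f = lsum f (seq 0 n).
Proof.
  induction n as [|n IH]; [reflexivity |].
  rewrite seq_S, lsum_app; simpl; rewrite IH; lra.
Qed.

Lemma Permutation_filter_split (A : Type) (f : A -> bool) l :
  Permutation l (filter f l ++ filter (fun x => negb (f x)) l).
Proof.
  induction l as [|a l IH]; simpl; [constructor |].
  destruct (f a); simpl; [constructor; exact IH |].
  apply Permutation_cons_app; exact IH.
Qed.

Lemma NoDup_app_disjoint (A : Type) (l1 l2 : list A) a :
  NoDup (l1 ++ l2) -> In a l1 -> ~ In a l2.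
Proof.
  induction l1 as [|b l1 IH]; simpl; intros Hnd Ha; [contradiction |].
  apply NoDup_cons_iff in Hnd as [Hb Hnd]; rewrite in_app_iff in Hb.
  destruct Ha as [<- | Ha]; [tauto | exact (IH Hnd Ha)].
Qed.

Definition disjoint_interiors (e : nat -> Z) (l : list nat) (x y : nat -> R) : Prop :=
  forall i j, In i l -> In j l -> i <> j -> forall p,
    ~ (open_sq (x i) (y i) (side (e i)) p /\ open_sq (x j) (y j) (side (e j)) p).

Definition packs_square (e : nat -> Z) (l : list nat) (K : Z) : Prop :=
  exists (x y : nat -> R) (a b : R),
    (forall i, In i l -> 0 <= x i) /\
    disjoint_interiors e l x y /\
    (forall p, open_sq a b (side K) p ->
       exists i, In i l /\ closed_sq (x i) (y i) (side (e i)) p).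

Lemma packs_square_same_elems e l l' K :
  (forall i, In i l <-> In i l') -> packs_square e l K -> packs_square e l' K.
Proof.
  intros Hl (x & y & a & b & Hx & Hdisj & Hcov).
  exists x, y, a, b; split; [| split].
  - intros i Hi; apply Hx, Hl, Hi.
  - intros i j Hi Hj; apply Hdisj; apply Hl; assumption.
  - intros p Hp; destruct (Hcov p Hp) as (i & Hi & Hc); exists i; rewrite <- Hl; auto.
Qed.

Lemma packs_square_single e i : packs_square e (i :: nil) (e i).
Proof.
  exists (fun _ => 0), (fun _ => 0), 0, 0; split; [| split].
  - intros; lra.
  - intros j k [<- | []] [<- | []] Hjk; congruence.
  - intros p Hp; exists i; split; [left; reflexivity |].
    unfold open_sq, closed_sq in *; lra.
Qed.

(* A new square [i] is put in the strip [0, side (e i)] and everything else is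
   shifted right by [side (e i)]; this is what the half-plane [0 <= x] is for. *)
Lemma packs_square_cons e l K i : packs_square e l K -> packs_square e (i :: l) K.
Proof.
  intros Hpack.
  destruct (in_dec Nat.eq_dec i l) as [Hi | Hi].
  { apply (packs_square_same_elems e l); [| exact Hpack].
    intros j; split; [intros Hj; right; exact Hj | intros [<- | Hj]; assumption]. }
  destruct Hpack as (x & y & a & b & Hx & Hdisj & Hcov).
  set (d := side (e i)); pose proof (side_pos (e i)) as Hd; fold d in Hd.
  exists (fun j => if Nat.eqb j i then 0 else x j + d),
         (fun j => if Nat.eqb j i then 0 else y j), (a + d), b.
  split; [| split].
  - intros j [<- | Hj]; rewrite ?Nat.eqb_refl; [lra |].
    destruct (Nat.eqb_spec j i) as [-> | _]; [contradiction |].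
    specialize (Hx j Hj); lra.
  - intros j k Hj Hk Hjk [p1 p2]; unfold open_sq; simpl.
    destruct (Nat.eqb_spec j i) as [-> | Hji], (Nat.eqb_spec k i) as [-> | Hki];
      [congruence | | |].
    + destruct Hk as [-> | Hk]; [congruence |]; specialize (Hx k Hk); fold d; lra.
    + destruct Hj as [-> | Hj]; [congruence |]; specialize (Hx j Hj); fold d; lra.
    + destruct Hj as [-> | Hj]; [congruence |]; destruct Hk as [-> | Hk]; [congruence |].
      intros H; apply (Hdisj j k Hj Hk Hjk (p1 - d, p2)); unfold open_sq; simpl; lra.
  - intros [p1 p2] Hp.
    destruct (Hcov (p1 - d, p2)) as (j & Hj & Hc); [unfold open_sq in *; simpl in *; lra |].
    exists j; split; [right; exact Hj |].
    destruct (Nat.eqb_spec j i) as [-> | _]; [contradiction |].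
    unfold closed_sq in *; simpl in *; lra.
Qed.

Lemma packs_square_incl e l l' K : incl l l' -> packs_square e l K -> packs_square e l' K.
Proof.
  intros Hll' Hpack.
  assert (Happ : forall l'', packs_square e (l'' ++ l) K).
  { intros l''; induction l'' as [|i l'' IH]; [exact Hpack |]; apply packs_square_cons, IH. }
  apply (packs_square_same_elems e (l' ++ l)); [| apply Happ].
  intros i; rewrite in_app_iff; split; [intros [Hi | Hi] | intros Hi]; auto.
Qed.

Lemma open_sq_sub x y d x' y' d' p :
  x <= x' -> x' + d' <= x + d -> y <= y' -> y' + d' <= y + d ->
  open_sq x' y' d' p -> open_sq x y d p.
Proof. unfold open_sq; lra. Qed.

Lemma closed_sq_quadrants x y s p :
  closed_sq x y (2 * s) p ->
  closed_sq x y s p \/ closed_sq (x + s) y s p \/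
  closed_sq x (y + s) s p \/ closed_sq (x + s) (y + s) s p.
Proof.
  unfold closed_sq; intros H.
  destruct (Rle_lt_dec (fst p) (x + s)), (Rle_lt_dec (snd p) (y + s)); lra.
Qed.

Definition tiles_square (e : nat -> Z) (q : list nat) (x y : nat -> R) (X Y D : R) : Prop :=
  (forall j, In j q ->
     X <= x j /\ x j + side (e j) <= X + D /\ Y <= y j /\ y j + side (e j) <= Y + D) /\
  disjoint_interiors e q x y /\
  (forall p, closed_sq X Y D p -> exists j, In j q /\ closed_sq (x j) (y j) (side (e j)) p).

Ltac simpl_eqb :=
  repeat match goal with |- context [Nat.eqb ?a ?b] =>
    destruct (Nat.eqb_spec a b); try congruence end.

Lemma quadrants_tile_square e i1 i2 i3 i4 m X Y :
  NoDup (i1 :: i2 :: i3 :: i4 :: nil) ->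
  e i1 = m -> e i2 = m -> e i3 = m -> e i4 = m ->
  exists x y, tiles_square e (i1 :: i2 :: i3 :: i4 :: nil) x y X Y (2 * side m).
Proof.
  intros Hnd E1 E2 E3 E4.
  assert (D : i1 <> i2 /\ i1 <> i3 /\ i1 <> i4 /\ i2 <> i3 /\ i2 <> i4 /\ i3 <> i4).
  { apply NoDup_cons_iff in Hnd as [N1 Hnd]; apply NoDup_cons_iff in Hnd as [N2 Hnd].
    apply NoDup_cons_iff in Hnd as [N3 _]; simpl in *; intuition. }
  destruct D as (D12 & D13 & D14 & D23 & D24 & D34).
  set (s := side m); pose proof (side_pos m) as Hs; fold s in Hs.
  set (x := fun j => if (Nat.eqb j i2 || Nat.eqb j i4)%bool then X + s else X).
  set (y := fun j => if (Nat.eqb j i3 || Nat.eqb j i4)%bool then Y + s else Y).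
  assert (Q1 : x i1 = X /\ y i1 = Y) by (unfold x, y; simpl_eqb; auto).
  assert (Q2 : x i2 = X + s /\ y i2 = Y) by (unfold x, y; simpl_eqb; auto).
  assert (Q3 : x i3 = X /\ y i3 = Y + s) by (unfold x, y; simpl_eqb; auto).
  assert (Q4 : x i4 = X + s /\ y i4 = Y + s) by (unfold x, y; simpl_eqb; auto).
  exists x, y; split; [| split].
  - intros j Hj; destruct Hj as [<- | [<- | [<- | [<- | []]]]];
      rewrite ?E1, ?E2, ?E3, ?E4; fold s; lra.
  - intros j k Hj Hk Hjk [p1 p2]; unfold open_sq; simpl.
    destruct Hj as [<- | [<- | [<- | [<- | []]]]], Hk as [<- | [<- | [<- | [<- | []]]]];
      try congruence; rewrite ?E1, ?E2, ?E3, ?E4; fold s; lra.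
  - intros p Hp.
    destruct (closed_sq_quadrants _ _ _ _ Hp) as [Hc | [Hc | [Hc | Hc]]];
      [exists i1 | exists i2 | exists i3 | exists i4]; (split; [simpl; tauto |]);
      rewrite ?E1, ?E2, ?E3, ?E4; fold s; unfold closed_sq in *; lra.
Qed.

Lemma packs_square_refine e e' l q i0 K :
  ~ In i0 l -> (forall j, In j q -> ~ In j l) -> (forall j, In j l -> e' j = e j) ->
  (forall X Y, exists x y, tiles_square e q x y X Y (side (e' i0))) ->
  packs_square e' (i0 :: l) K -> packs_square e (q ++ l) K.
Proof.
  intros Hi0 Hq He' Htile (x & y & a & b & Hx & Hdisj & Hcov).
  destruct (Htile (x i0) (y i0)) as (xq & yq & Hin & Hdisjq & Hcovq).
  set (x' := fun j => if in_dec Nat.eq_dec j q then xq j else x j).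
  set (y' := fun j => if in_dec Nat.eq_dec j q then yq j else y j).
  assert (Hposq : forall j, In j q -> x' j = xq j /\ y' j = yq j).
  { intros j Hj; unfold x', y'; destruct (in_dec Nat.eq_dec j q); tauto. }
  assert (Hposl : forall j, In j l -> x' j = x j /\ y' j = y j /\ e j = e' j /\ j <> i0).
  { intros j Hj; unfold x', y'; rewrite He' by exact Hj.
    destruct (in_dec Nat.eq_dec j q) as [Hjq | _]; [destruct (Hq j Hjq Hj) |].
    repeat split; auto; intros ->; contradiction. }
  assert (Hsub : forall j, In j q -> forall p,
    open_sq (x' j) (y' j) (side (e j)) p -> open_sq (x i0) (y i0) (side (e' i0)) p).
  { intros j Hj p; destruct (Hposq j Hj) as [-> ->]; apply open_sq_sub; apply Hin; exact Hj. }
  exists x', y', a, b; split; [| split].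
  - intros j Hj; apply in_app_iff in Hj as [Hj | Hj].
    + destruct (Hposq j Hj) as [-> _]; specialize (Hx i0 (or_introl eq_refl)).
      destruct (Hin j Hj); lra.
    + destruct (Hposl j Hj) as (-> & _); exact (Hx j (or_intror Hj)).
  - intros j k Hj Hk Hjk p [Hpj Hpk].
    apply in_app_iff in Hj as [Hj | Hj], Hk as [Hk | Hk].
    + destruct (Hposq j Hj) as [Exj Eyj], (Hposq k Hk) as [Exk Eyk].
      rewrite Exj, Eyj in Hpj; rewrite Exk, Eyk in Hpk.
      exact (Hdisjq j k Hj Hk Hjk p (conj Hpj Hpk)).
    + destruct (Hposl k Hk) as (Exk & Eyk & Ek & Hki0); rewrite Exk, Eyk, Ek in Hpk.
      apply (Hdisj i0 k (or_introl eq_refl) (or_intror Hk) (not_eq_sym Hki0) p).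
      split; [apply (Hsub j Hj p Hpj) | exact Hpk].
    + destruct (Hposl j Hj) as (Exj & Eyj & Ej & Hji0); rewrite Exj, Eyj, Ej in Hpj.
      apply (Hdisj i0 j (or_introl eq_refl) (or_intror Hj) (not_eq_sym Hji0) p).
      split; [apply (Hsub k Hk p Hpk) | exact Hpj].
    + destruct (Hposl j Hj) as (Exj & Eyj & Ej & _), (Hposl k Hk) as (Exk & Eyk & Ek & _).
      rewrite Exj, Eyj, Ej in Hpj; rewrite Exk, Eyk, Ek in Hpk.
      exact (Hdisj j k (or_intror Hj) (or_intror Hk) Hjk p (conj Hpj Hpk)).
  - intros p Hp; destruct (Hcov p Hp) as (j & [<- | Hj] & Hc).
    + destruct (Hcovq p Hc) as (k & Hk & Hck); exists k; split; [apply in_or_app; auto |].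
      destruct (Hposq k Hk) as [-> ->]; exact Hck.
    + exists j; split; [apply in_or_app; auto |].
      destruct (Hposl j Hj) as (-> & -> & -> & _); exact Hc.
Qed.

Definition sq_sum (e : nat -> Z) (l : list nat) : R := lsum (fun i => side (e i) ^ 2) l.

Definition packs_big_square (e : nat -> Z) (l : list nat) : Prop :=
  exists K, packs_square e l K /\
    exists j, In j l /\ sq_sum e l + side (e j) ^ 2 <= 4 * side K ^ 2.

Lemma exists_min_exponent (e : nat -> Z) l :
  l <> nil -> exists i, In i l /\ forall j, In j l -> (e i <= e j)%Z.
Proof.
  induction l as [|a l IH]; intros Hne; [congruence |].
  destruct l as [|b l].
  - exists a; split; [left; reflexivity | intros j [-> | []]; lia].
  - destruct IH as (i & Hi & Hmin); [discriminate |].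
    destruct (Z.le_gt_cases (e a) (e i)).
    + exists a; split; [left; reflexivity |].
      intros j [-> | Hj]; [lia | specialize (Hmin j Hj); lia].
    + exists i; split; [right; exact Hi |].
      intros j [-> | Hj]; [lia | exact (Hmin j Hj)].
Qed.

Section SmallestSquares.

Variables (e : nat -> Z) (l : list nat) (m : Z).
Hypothesis Hmin : forall j, In j l -> (m <= e j)%Z.

Let Ls := filter (fun i => Z.eqb (e i) m) l.
Let Lo := filter (fun i => negb (Z.eqb (e i) m)) l.

Lemma NoDup_smallest_split i1 i2 i3 i4 L :
  NoDup l -> Ls = i1 :: i2 :: i3 :: i4 :: L ->
  NoDup ((i1 :: i2 :: i3 :: i4 :: nil) ++ L ++ Lo).
Proof.
  intros Hnd HLs; change (NoDup ((i1 :: i2 :: i3 :: i4 :: L) ++ Lo)); rewrite <- HLs.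
  exact (Permutation_NoDup (Permutation_filter_split _ _ l) Hnd).
Qed.

Lemma sq_sum_split : sq_sum e l = INR (length Ls) * side m ^ 2 + sq_sum e Lo.
Proof.
  unfold sq_sum; rewrite (lsum_perm _ _ _ (Permutation_filter_split _ (fun i => Z.eqb (e i) m) l)).
  rewrite lsum_app; fold Ls Lo; f_equal.
  apply lsum_const_in; intros i Hi; apply filter_In in Hi as [_ Hi].
  apply Z.eqb_eq in Hi as ->; reflexivity.
Qed.

Lemma packs_big_square_few_smallest i0 :
  In i0 l -> e i0 = m -> (length Ls <= 3)%nat ->
  Lo = nil \/ packs_big_square e Lo -> packs_big_square e l.
Proof.
  intros Hi0 Ei0 Hlen HR.
  pose proof sq_sum_split as Hsum.
  apply le_INR in Hlen; simpl in Hlen.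
  pose proof (pow2_ge_0 (side m)).
  destruct HR as [HR | (K & Hpack & j & Hj & Hbound)].
  - exists m; split.
    + rewrite <- Ei0; apply (packs_square_incl e (i0 :: nil)); [| apply packs_square_single].
      intros i [<- | []]; exact Hi0.
    + exists i0; split; [exact Hi0 |].
      rewrite Hsum, HR, Ei0; unfold sq_sum; simpl; nra.
  - exists K; split.
    + apply (packs_square_incl e Lo); [apply incl_filter | exact Hpack].
    + exists i0; split; [exact Hi0 |].
      apply filter_In in Hj as [Hjl Hjm]; apply Bool.negb_true_iff, Z.eqb_neq in Hjm.
      assert (Hsucc : (m + 1 <= e j)%Z) by (specialize (Hmin j Hjl); lia).
      apply side_sq_le in Hsucc; rewrite side_succ in Hsucc.
      rewrite Hsum, Ei0; nra.
Qed.

Lemma packs_big_square_merge i1 i2 i3 i4 L :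
  NoDup l -> Ls = i1 :: i2 :: i3 :: i4 :: L ->
  packs_big_square (fun i => if Nat.eqb i i1 then (m + 1)%Z else e i) (i1 :: L ++ Lo) ->
  packs_big_square e l.
Proof.
  set (e' := fun i => if Nat.eqb i i1 then (m + 1)%Z else e i).
  intros Hnd HLs (K & Hpack & j & Hj & Hbound).
  assert (Hperm : Permutation l (i1 :: i2 :: i3 :: i4 :: L ++ Lo)).
  { change (Permutation l ((i1 :: i2 :: i3 :: i4 :: L) ++ Lo)).
    rewrite <- HLs; apply Permutation_filter_split. }
  assert (Em : forall i, In i (i1 :: i2 :: i3 :: i4 :: nil) -> e i = m).
  { intros i Hi; assert (HiLs : In i Ls) by (rewrite HLs; simpl in *; tauto).
    apply filter_In in HiLs as [_ HiLs]; apply Z.eqb_eq, HiLs. }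
  pose proof (NoDup_smallest_split _ _ _ _ _ Hnd HLs) as Hnd'.
  assert (Hi1 : ~ In i1 (L ++ Lo)) by (apply (NoDup_app_disjoint _ _ _ _ Hnd'); left; reflexivity).
  assert (He' : forall i, In i (L ++ Lo) -> e' i = e i).
  { intros i Hi; unfold e'; destruct (Nat.eqb_spec i i1) as [-> |]; [contradiction | reflexivity]. }
  assert (He'1 : e' i1 = (m + 1)%Z) by (unfold e'; rewrite Nat.eqb_refl; reflexivity).
  exists K; split.
  - apply (packs_square_incl e ((i1 :: i2 :: i3 :: i4 :: nil) ++ L ++ Lo)).
    { intros i Hi; apply (Permutation_in _ (Permutation_sym Hperm)), Hi. }
    apply (packs_square_refine e e' _ _ i1); auto.
    + intros i; apply (NoDup_app_disjoint _ _ _ _ Hnd').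
    + intros X Y; rewrite He'1, side_succ.
      apply quadrants_tile_square; [apply (NoDup_app_remove_r _ _ Hnd') | ..]; apply Em; simpl; tauto.
  - exists i1; split; [apply (Permutation_in _ (Permutation_sym Hperm)); left; reflexivity |].
    assert (Hsum : sq_sum e l = sq_sum e' (i1 :: L ++ Lo)).
    { unfold sq_sum; rewrite (lsum_perm _ _ _ Hperm); cbn [lsum].
      rewrite He'1, side_succ, (Em i1), (Em i2), (Em i3), (Em i4) by (simpl; tauto).
      rewrite (lsum_ext_in (fun i => side (e' i) ^ 2) (fun i => side (e i) ^ 2) (L ++ Lo))
        by (intros i Hi; rewrite He' by exact Hi; reflexivity).
      ring. }
    assert (Hj' : (m <= e' j)%Z).
    { destruct Hj as [<- | Hj]; [lia |]; rewrite He' by exact Hj.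
      apply Hmin, (Permutation_in _ (Permutation_sym Hperm)); simpl; tauto. }
    apply side_sq_le in Hj'; rewrite Hsum, (Em i1) by (simpl; tauto); lra.
Qed.

End SmallestSquares.

Lemma packs_big_square_of_NoDup e l : NoDup l -> l <> nil -> packs_big_square e l.
Proof.
  revert e; induction l as [l IH] using (induction_ltof1 _ (@length nat)); intros e Hnd Hne.
  destruct (exists_min_exponent e l Hne) as (i0 & Hi0 & Hmin).
  set (m := e i0) in *.
  set (Ls := filter (fun i => Z.eqb (e i) m) l).
  set (Lo := filter (fun i => negb (Z.eqb (e i) m)) l).
  assert (Hlen : (length Ls + length Lo)%nat = length l) by apply filter_length.
  assert (Hi0m : In i0 Ls) by (apply filter_In; split; [exact Hi0 | apply Z.eqb_refl]).
  destruct Ls as [|i1 [|i2 [|i3 [|i4 L]]]] eqn:HLs; try contradiction.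
  4: { apply (packs_big_square_merge e l m Hmin i1 i2 i3 i4 L Hnd HLs); fold Lo.
       pose proof (NoDup_smallest_split e l m _ _ _ _ _ Hnd HLs) as Hnd'.
       apply IH; [unfold ltof; simpl in *; rewrite length_app; lia | | discriminate].
       constructor; [apply (NoDup_app_disjoint _ _ _ _ Hnd'); left; reflexivity |].
       apply (NoDup_app_remove_l _ _ Hnd'). }
  all: apply (packs_big_square_few_smallest e l m Hmin i0 Hi0 eq_refl); fold Ls Lo;
    [rewrite HLs; simpl; lia |];
    (destruct (list_eq_dec Nat.eq_dec Lo nil) as [HR | HR]; [left; exact HR | right]);
    apply IH; [unfold ltof; simpl in Hlen; lia | apply NoDup_filter, Hnd | exact HR].
Qed.

Lemma half_sqrt_le (A s : R) : 0 <= s -> A <= 4 * s ^ 2 -> / 2 * sqrt A <= s.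
Proof.
  intros Hs HA.
  assert (Hsqrt : sqrt A <= sqrt ((2 * s) ^ 2)) by (apply sqrt_le_1_alt; lra).
  rewrite sqrt_pow2 in Hsqrt by lra; lra.
Qed.

Theorem lemma5 (n : nat) (e : nat -> Z) :
  exists (x y : nat -> R) (a b s : R),
    (forall i j : nat, (i < n)%nat -> (j < n)%nat -> i <> j ->
       forall p : R * R,
         ~ (open_sq (x i) (y i) (side (e i)) p /\
            open_sq (x j) (y j) (side (e j)) p)) /\
    s >= / 2 * sqrt (sum_lt n (fun i => side (e i) ^ 2)) /\
    (forall p : R * R, open_sq a b s p ->
       exists i : nat, (i < n)%nat /\ closed_sq (x i) (y i) (side (e i)) p).
Proof.
  destruct n as [|n].
  { exists (fun _ => 0), (fun _ => 0), 0, 0, 0; split; [intros; lia | split].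
    - simpl; rewrite sqrt_0; lra.
    - unfold open_sq; intros p Hp; lra. }
  destruct (packs_big_square_of_NoDup e (seq 0 (S n)) (seq_NoDup _ _) ltac:(discriminate))
    as (K & (x & y & a & b & _ & Hdisj & Hcov) & j & _ & Hbound).
  exists x, y, a, b, (side K); split; [| split].
  - intros i k Hi Hk; apply Hdisj; apply in_seq; lia.
  - apply Rle_ge, half_sqrt_le; [apply Rlt_le, side_pos |].
    rewrite lsum_seq; pose proof (pow2_ge_0 (side (e j))); unfold sq_sum in Hbound; lra.
  - intros p Hp; destruct (Hcov p Hp) as (i & Hi & Hc).
    exists i; split; [apply in_seq in Hi; lia | exact Hc].
Qed.
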